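(* Let $B=\{1,\dots,n\}$ be a set of bidders with nonnegative bids, and for $S\subseteq B$ let $R(S)$ be the revenue of a second-price auction (no reserve) among the bidders in $S$, i.e. the second-highest bid in $S$ (and $0$ if $|S|\le 1$). For $S\subseteq B$, let $\mathbf{b}_S\in\mathbb{R}^n$ be the vector whose first $|S|$ coordinates are the bids of the bidders in $S$ sorted in decreasing order and whose remaining coordinates are $0$. Suppose a revenue attribution $\mathbf{R}_S=(R_1,\dots,R_n)$ assigns to the bidders (in this sorted order) revenue shares satisfying, for every bid vector and every $S$: (1) Symmetry: bidders in $S$ with equal bids receive equal attribution; (2) Linearity: $\mathbf{R}_S = \mathbf{A}\,\mathbf{b}_S$ for a fixed $n\times n$ matrix $\mathbf{A}$ (independent of the bids and of $S$); (3) Conservation of revenue: $\sum_{i\in S} R_i = R(S)$. Then $\mathbf{A}$ is uniquely determined: its first column is $0$; its second column is $(\tfrac12,\tfrac12,0,\dots,0)^T$; and for $3\le j\le n$ its $j$-th column has entries $-\frac{1}{j(j-1)}$ in rows $1,\dots,j-1$, entry $\frac{1}{j}$ in row $j$, and $0$ in rows $j+1,\dots,n$. Equivalently, $\mathbf{A}\mathbf{e}_1=0$ and $\mathbf{A}\mathbf{e}_k=\frac1k\mathbf{e}_k$ for $k=2,\dots,n$, where $\mathbf{e}_k$ has ones in its first $k$ positions and zeros elsewhere.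
   Context: Bids are indexed by order statistics $b_{(1)}\ge b_{(2)}\ge\cdots$; the attribution vector $\mathbf{R}_S$ is indexed in the same sorted order, with entries outside the first $|S|$ positions corresponding to absent bidders. *)

From HB Require Import structures.
From mathcomp Require Import all_boot all_order all_algebra.
Set Implicit Arguments. Unset Strict Implicit. Unset Printing Implicit Defensive.
Import Order.TTheory GRing.Theory Num.Theory.
Local Open Scope ring_scope.

Definition sorted_bids (R : realFieldType) (n : nat) (b : 'I_n -> R)
    (S : {set 'I_n}) : seq R :=
  sort (fun x y : R => y <= x) [seq b i | i in S].

Definition bvec (R : realFieldType) (n : nat) (b : 'I_n -> R)
    (S : {set 'I_n}) : 'cV[R]_n :=
  \col_(k < n) nth 0 (sorted_bids b S) k.

(* R(S): second-highest bid in S, 0 if |S| <= 1. *)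
Definition second_price (R : realFieldType) (n : nat) (b : 'I_n -> R)
    (S : {set 'I_n}) : R :=
  nth 0 (sorted_bids b S) 1.

(* The claimed matrix (0-indexed: column j here is column j+1 of the paper). *)
Definition attrib_matrix (R : realFieldType) (n : nat) : 'M[R]_n :=
  \matrix_(i < n, j < n)
    (if (j == 0 :> nat) then 0
     else if (j == 1 :> nat) then (if (i <= 1)%N then 2%:R^-1 else 0)
     else if (i < j)%N then - ((j.+1 * j)%N%:R)^-1
     else if (i == j :> nat) then (j.+1)%:R^-1
     else 0).

From HB Require Import structures.
From mathcomp Require Import all_boot all_order all_algebra.
From mathcomp Require Import ring.
Import Order.TTheory GRing.Theory Num.Theory.
Local Open Scope ring_scope.

(* Feed the axioms the bids e_k (k bidders bidding 1, the others 0), so that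
   b_S = e_k both for S = the first k bidders and for S = everybody.  For the
   first k bidders, symmetry makes A e_k constant on the first k positions and
   conservation fixes that constant to [1 < k] / k.  For everybody, symmetry
   makes A e_k constant on the last n - k positions, and conservation leaves
   nothing for them, so they vanish.  The columns of A are the differences
   A e_(j+1) - A e_j. *)

Section PrefixColumn.
Variables (R : nzRingType) (n : nat).

Definition prefix_col (k : nat) : 'cV[R]_n := \col_(i < n) (i < k)%N%:R.

Lemma prefix_colS (j : 'I_n) : prefix_col j.+1 - prefix_col j = delta_mx j 0.
Proof.
apply/matrixP => i l; rewrite !mxE ord1 eqxx andbT ltnS leq_eqVlt.
have [->|ne_ij] := eqVneq i j; first by rewrite eqxx ltnn subr0.
by rewrite -[val i == _]/(i == j) (negbTE ne_ij) subrr.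
Qed.

Lemma mul_prefix_colS m (A : 'M[R]_(m, n)) (i : 'I_m) (j : 'I_n) :
  (A *m prefix_col j.+1) i 0 - (A *m prefix_col j) i 0 = A i j.
Proof.
transitivity (col j A i 0); last by rewrite mxE.
by rewrite colE -prefix_colS mulmxBr !mxE.
Qed.

End PrefixColumn.

Section PrefixBids.
Variables (R : realFieldType) (n : nat).

Definition prefix_bids (k : nat) (i : 'I_n) : R := (i < k)%N%:R.
Definition prefix_set (m : nat) : {set 'I_n} := [set i : 'I_n | (i < m)%N].

Lemma prefix_bids_ge0 k i : 0 <= prefix_bids k i.
Proof. exact: ler0n. Qed.

Lemma card_prefix_set m : (m <= n)%N -> #|prefix_set m| = m.
Proof.
move=> le_mn; rewrite -sum1_card (eq_bigl (fun i : 'I_n => true && (i < m)%N)).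
  by rewrite (big_ord_narrow_cond le_mn) sum1_card card_ord.
by move=> i; rewrite inE.
Qed.

Lemma prefix_set_n : prefix_set n = setT.
Proof. by apply/setP => i; rewrite !inE ltn_ord. Qed.

Lemma val_enum_prefix_set m : (m <= n)%N -> [seq val i | i in prefix_set m] = iota 0 m.
Proof.
move=> le_mn; rewrite /image_mem /enum_mem -enumT.
rewrite (eq_filter (a2 := preim val (fun i => i < m)%N)) => [|i]; last by rewrite !inE.
by rewrite -filter_map val_enum_ord (filter_iota_ltn 0 le_mn).
Qed.

Lemma sorted_bids_prefix k m : (m <= n)%N ->
  sorted_bids (prefix_bids k) (prefix_set m) = [seq (i < k)%N%:R | i <- iota 0 m].
Proof.
move=> le_mn; rewrite /sorted_bids.
have -> : [seq prefix_bids k i | i in prefix_set m] = [seq (i < k)%N%:R | i <- iota 0 m].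
  by rewrite -(val_enum_prefix_set _ le_mn) /image_mem -map_comp.
apply: sorted_sort; first exact: ge_trans.
apply: (homo_sorted (e := leq)); last exact: iota_sorted.
move=> i j le_ij; rewrite ler_nat.
by case: (ltnP j k) => // /(leq_ltn_trans le_ij) ->.
Qed.

Lemma bvec_prefix k m : (k <= m)%N -> (m <= n)%N ->
  bvec (prefix_bids k) (prefix_set m) = prefix_col R n k.
Proof.
move=> le_km le_mn; apply/matrixP => i j; rewrite !mxE sorted_bids_prefix //.
have [lt_im | le_mi] := ltnP i m; first by rewrite (nth_map 0) ?size_iota ?nth_iota.
by rewrite nth_default ?size_map ?size_iota // ltnNge (leq_trans le_km le_mi).
Qed.

Lemma second_price_prefix k m : (k <= m)%N -> (m <= n)%N ->
  second_price (prefix_bids k) (prefix_set m) = (1 < k)%N%:R.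
Proof.
move=> le_km le_mn; rewrite /second_price sorted_bids_prefix //.
have [lt_1m | le_m1] := ltnP 1 m; first by rewrite (nth_map 0) ?size_iota ?nth_iota.
by rewrite nth_default ?size_map ?size_iota // ltnNge (leq_trans le_km le_m1).
Qed.

End PrefixBids.

Section PrefixShare.
Variables (R : realFieldType) (n : nat).

Definition prefix_share (k : nat) (i : 'I_n) : R :=
  if (i < k)%N then (1 < k)%N%:R / k%:R else 0.

Lemma attrib_matrix_prefix_share (i j : 'I_n) :
  attrib_matrix R n i j = prefix_share j.+1 i - prefix_share j i.
Proof.
rewrite mxE /prefix_share; case: j => [[|[|j]] lt_jn] /=.
- by rewrite mul0r if_same subr0.
- by rewrite mul0r if_same subr0 mul1r ltnS.
case: (ltngtP i j.+2) => [lt_ij | gt_ij | ->].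
- rewrite (ltn_trans lt_ij (ltnSn _)) !mul1r natrM.
  by field; rewrite -!natrD !pnatr_eq0.
- by rewrite ltnNge gt_ij subr0.
- by rewrite ltnSn subr0 mul1r.
Qed.

End PrefixShare.

Definition attribution_axioms {R : realFieldType} {n : nat} (A : 'M[R]_n) : Prop :=
  forall b : 'I_n -> R, (forall i, 0 <= b i) ->
  forall S : {set 'I_n},
    (forall k l : 'I_n, (k < #|S|)%N -> (l < #|S|)%N ->
       bvec b S k ord0 = bvec b S l ord0 ->
       (A *m bvec b S) k ord0 = (A *m bvec b S) l ord0) /\
    \sum_(k < n | (k < #|S|)%N) (A *m bvec b S) k ord0 = second_price b S.

Section Attribution.
Context {R : realFieldType} {n : nat} {A : 'M[R]_n}.
Hypothesis attrA : attribution_axioms A.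

Lemma attribution_prefix_eq k m (l1 l2 : 'I_n) : (k <= m)%N -> (m <= n)%N ->
  (l1 < m)%N -> (l2 < m)%N -> (l1 < k)%N = (l2 < k)%N ->
  (A *m prefix_col R n k) l1 0 = (A *m prefix_col R n k) l2 0.
Proof.
move=> le_km le_mn lt_l1m lt_l2m eq_l12.
have [sym _] := attrA _ (@prefix_bids_ge0 R n k) (prefix_set n m).
rewrite card_prefix_set // bvec_prefix // in sym.
by apply: sym => //; rewrite !mxE eq_l12.
Qed.

Lemma attribution_prefix_sum k m : (k <= m)%N -> (m <= n)%N ->
  \sum_(l in prefix_set n m) (A *m prefix_col R n k) l 0 = (1 < k)%N%:R.
Proof.
move=> le_km le_mn; have [_ sum] := attrA _ (@prefix_bids_ge0 R n k) (prefix_set n m).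
rewrite card_prefix_set // bvec_prefix // second_price_prefix // in sum.
by rewrite -sum; apply: eq_bigl => l; rewrite inE.
Qed.

Lemma attribution_prefix_col k (i : 'I_n) : (k <= n)%N ->
  (A *m prefix_col R n k) i 0 = prefix_share R n k i.
Proof.
move=> le_kn; rewrite /prefix_share; set v := A *m prefix_col R n k.
have [lt_ik | le_ki] := ltnP i k.
  have := attribution_prefix_sum k k (leqnn k) le_kn.
  rewrite (eq_bigr (fun=> v i 0)) => [|l]; last first.
    by rewrite inE => lt_lk; apply: (attribution_prefix_eq k k); rewrite ?lt_lk.
  rewrite sumr_const card_prefix_set // => <-.
  by rewrite -[_ *+ k]mulr_natr mulfK // pnatr_eq0 -lt0n (leq_ltn_trans _ lt_ik).
have := attribution_prefix_sum k n le_kn (leqnn n).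
rewrite prefix_set_n (big_setID (prefix_set n k)) setTI setTD /=.
rewrite attribution_prefix_sum ?leqnn // (eq_bigr (fun=> v i 0)) => [|l]; last first.
  rewrite !inE => /negbTE nlt_lk.
  by apply: (attribution_prefix_eq k n); rewrite ?ltn_ord ?nlt_lk ?(leq_gtF le_ki).
rewrite sumr_const -{2}[_%:R]addr0 => /addrI /eqP.
rewrite mulrn_eq0 => /orP[/eqP no_high | /eqP //].
have := cardsC (prefix_set n k); rewrite no_high addn0 card_prefix_set // card_ord.
by move=> eq_kn; have := ltn_ord i; rewrite -[X in (_ < X)%N]eq_kn ltnNge le_ki.
Qed.

End Attribution.

Theorem proposition3 (R : realFieldType) (n : nat) (A : 'M[R]_n) :
  (forall b : 'I_n -> R, (forall i, 0 <= b i) ->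
   forall S : {set 'I_n},
     (* Symmetry: positions (in sorted order) of bidders of S with equal bids
        receive equal attribution *)
     (forall k l : 'I_n, (k < #|S|)%N -> (l < #|S|)%N ->
        bvec b S k ord0 = bvec b S l ord0 ->
        (A *m bvec b S) k ord0 = (A *m bvec b S) l ord0) /\
     (* Conservation of revenue *)
     \sum_(k < n | (k < #|S|)%N) (A *m bvec b S) k ord0 = second_price b S) ->
  A = attrib_matrix R n.
Proof.
move=> attrA; apply/matrixP => i j.
rewrite attrib_matrix_prefix_share -mul_prefix_colS.
by rewrite !(attribution_prefix_col attrA) // ltnW.
Qed.
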